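(* Let $d,n\ge 1$, let $\mathcal{B}=\{x\in\mathbb{R}^d : x_i\in[\underline{x}_i,\overline{x}_i],\ i=1,\dots,d\}$ be a box with $\underline{x}_i\le \overline{x}_i$, and let $f:\mathbb{R}^d\to\mathbb{R}$ and $f_1,\dots,f_n:\mathbb{R}^d\to\mathbb{R}$ satisfy the assumptions stated in the context (in particular $f$ is a continuous piece-wise function defined in terms of $f_1,\dots,f_n$, each $f_j$ is differentiable on $\mathbb{R}^d$ and analytic along every line, and $\gamma>0$ bounds the second directional derivatives of the $f_j$). Let $\{x_s\}_{s\ge 0}$ be any sequence of iterates generated by the iteration described in the context (the multidimensional algorithm, run without termination). Then every limit point of $\{x_s\}$ is a global minimizer of the problem $f^*:=\min_{x\in\mathcal{B}} f(x)$.
   Context: Assumptions. $f_1,\dots,f_n:\mathbb{R}^d\to\mathbb{R}$ are differentiable on $\mathbb{R}^d$, and each $f_j$ is analytic along every line in $\mathbb{R}^d$, i.e. for every $x\in\mathbb{R}^d$ and $p\in\mathbb{R}^d$ the function $\alpha\mapsto f_j(x+\alpha p)$ is real analytic on $\mathbb{R}$. The function $f:\mathbb{R}^d\to\mathbb{R}$ is continuous and piece-wise defined in terms of $f_1,\dots,f_n$: for every $x,y\in\mathbb{R}^d$, the segment $\{x+t(y-x): t\in[0,1]\}$ can be split into finitely many subintervals $[t_\ell,t_{\ell+1}]$ of $[0,1]$ on each of which $t\mapsto f(x+t(y-x))$ coincides with $t\mapsto f_j(x+t(y-x))$ for some index $j\in\{1,\dots,n\}$ (depending on the subinterval). The scalar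 $\gamma>0$ satisfies $\left|\frac{d^2}{d\alpha^2} f_j(x+\alpha p)\right|\le\gamma$ for all $j=1,\dots,n$, all $x\in\mathbb{R}^d$, all unit vectors $p\in\mathbb{R}^d$ ($\|p\|_2=1$), and all $\alpha\in\mathbb{R}$. Quadratic models. For a point $y\in\mathbb{R}^d$ define $q_y(x):=f(y)+\min_{j=1,\dots,n}\{\nabla f_j(y)^T(x-y)\}-\frac{\gamma}{2}\|x-y\|_2^2$. The iteration (multidimensional algorithm). Pick an arbitrary $x_0\in\mathcal{B}$. For $s=0,1,2,\dots$: set $q_s:=q_{x_s}$, $\overline{q}_s(x):=\max_{k=0,\dots,s} q_k(x)$, choose $x_{s+1}$ to be a global minimizer of $\overline{q}_s$ over $\mathcal{B}$, and set the lower bound $l_{s+1}:=\overline{q}_s(x_{s+1})$ and the upper bound $u_{s+1}:=\min_{k=0,\dots,s+1} f(x_k)$. (In the paper the loop stops once $u_s-l_s\le\epsilon$ for a tolerance $\epsilon>0$; the theorem concerns the infinite sequence $\{x_s\}$ produced when the iteration is continued indefinitely.) *)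

From HB Require Import structures.
From mathcomp Require Import all_boot all_order all_algebra.
From mathcomp Require Import all_classical all_reals all_analysis.
Set Implicit Arguments. Unset Strict Implicit. Unset Printing Implicit Defensive.
Import Order.TTheory GRing.Theory Num.Theory.
Import numFieldNormedType.Exports.
Local Open Scope classical_set_scope.
Local Open Scope ring_scope.

Section Defs.
Variable R : realType.

Definition sqnorm2 (d : nat) (x : 'rV[R]_d) : R := \sum_(i < d) (x ord0 i) ^+ 2.

Definition box (d : nat) (lo hi : 'rV[R]_d) : set 'rV[R]_d :=
  [set x | forall i, lo ord0 i <= x ord0 i <= hi ord0 i].

Definition real_analytic (g : R -> R) : Prop :=
  forall a : R, exists r : R, 0 < r /\ exists c : nat -> R,
    forall t : R, `|t - a| < r ->
      (fun N : nat => \sum_(k < N) c k * (t - a) ^+ k) @ \oo --> g t.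

Definition minI (n : nat) (D : 'I_n -> R) : R :=
  \big[Num.min/head 0 [seq D j | j <- enum 'I_n]]_(j < n) D j.

Definition piecewise_of (d n : nat) (f : 'rV[R]_d -> R)
  (F : 'I_n -> 'rV[R]_d -> R) : Prop :=
  forall x y : 'rV[R]_d, exists (m : nat) (t : nat -> R) (J : nat -> 'I_n),
    [/\ t 0%N = 0, t m = 1,
        (forall l, (l < m)%N -> t l <= t l.+1) &
        (forall l, (l < m)%N -> forall s, t l <= s <= t l.+1 ->
            f (x + s *: (y - x)) = F (J l) (x + s *: (y - x)))].

(* quadratic model q_y(x) = f(y) + min_j grad f_j(y)^T (x-y) - gamma/2 ||x-y||^2 ;
   grad f_j(y)^T v is the (Frechet) differential 'd f_j y applied to v *)
Definition qmodel (d n : nat) (f : 'rV[R]_d -> R) (F : 'I_n -> 'rV[R]_d -> R)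
  (gamma : R) (y x : 'rV[R]_d) : R :=
  f y + minI (fun j => 'd (F j) y (x - y)) - gamma / 2 * sqnorm2 (x - y).

Definition qbar (d n : nat) (f : 'rV[R]_d -> R) (F : 'I_n -> 'rV[R]_d -> R)
  (gamma : R) (xs : nat -> 'rV[R]_d) (s : nat) (z : 'rV[R]_d) : R :=
  \big[Num.max/qmodel f F gamma (xs 0%N) z]_(k < s.+1) qmodel f F gamma (xs k) z.

End Defs.

From HB Require Import structures.
From mathcomp Require Import all_boot all_order all_algebra.
From mathcomp Require Import all_classical all_reals all_analysis.
From mathcomp Require Import ring lra.
Import Order.TTheory GRing.Theory Num.Theory.
Import numFieldNormedType.Exports.
Set Implicit Arguments. Unset Strict Implicit. Unset Printing Implicit Defensive.
Local Open Scope classical_set_scope.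
Local Open Scope ring_scope.

(* Every model q_y under-estimates f: along the segment from y to z, f is piecewise
   one of the F_j, each of which is C^2 along lines (being analytic there) with second
   derivative at most gamma, so a second-order Taylor bound on each piece gives
   f z - f y >= min_j 'd F_j y (z - y) - gamma/2 ||z - y||^2.  Hence, for k < m and z
   in the box, q_{x_k}(x_m) <= qbar_{m-1}(x_m) <= qbar_{m-1}(z) <= f z.  When x_k and
   x_m are both close to a limit point x*, the same Taylor bound from x_k towards
   2 x_k - x_m bounds 'd F_j x_k (x_m - x_k) from below, so q_{x_k}(x_m) is close to
   f x* by continuity of f and of the F_j; therefore f x* <= f z. *)

Section PowerSeries.
Variable R : realType.

Lemma is_cvg_pseries_diffs (c : R^nat) (x z : R) :
  cvgn (pseries c x) -> x != 0 -> 4 * `|z| <= `|x| ->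
  cvgn (pseries (pseries_diffs c) z).
Proof.
move=> cx x0 zx.
have [K [_ Kf]] := cvg_series_bounded cx.
pose M : R := `|K| + 1.
have KM : K < M by rewrite /M (le_lt_trans (ler_norm K)) // ltrDl.
have cxM i : `|c i * x ^+ i| <= M by exact: Kf.
pose X : R := `|x|.
have X0 : 0 < X by rewrite normr_gt0.
apply: normed_cvg.
(* [(k+1) |z|^k <= 2^k (|x|/4)^k = |x|^k / 2^k]: the terms are dominated by a geometric series. *)
apply: (@series_le_cvg R _ (geometric (M / X) (2^-1))) => [k //=|k|k /=|].
- rewrite /geometric /= mulr_ge0 ?exprn_ge0 ?invr_ge0 //.
  by rewrite divr_ge0 ?(ltW X0) // (le_trans _ (cxM 0%N)).
- rewrite /pseries_diffs /geometric !normrM normrX normr_nat.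
  have Ak := cxM k.+1; rewrite normrM normrX -/X in Ak.
  have k2 : k.+1%:R <= 2 ^+ k :> R by rewrite -natrX ler_nat ltn_expl.
  have zk : `|z| ^+ k <= (X / 4) ^+ k.
    by rewrite lerXn2r ?nnegrE ?divr_ge0 ?(ltW X0) // /X; lra.
  apply: (@le_trans _ _ (2 ^+ k * `|c k.+1| * (X / 4) ^+ k)).
    by apply: ler_pM; rewrite ?mulr_ge0 ?exprn_ge0 // ler_wpM2r.
  have -> : 2 ^+ k * `|c k.+1| * (X / 4) ^+ k = `|c k.+1| * X ^+ k.+1 / X * 2^-1 ^+ k.
    have -> : X / 4 = X * 2^-1 * 2^-1 by field.
    rewrite !exprMn exprS !exprVn.
    by field; rewrite expf_neq0 // lt0r_neq0.
  by rewrite ler_pM2r ?exprn_gt0 ?invr_gt0 // ler_pM2r ?invr_gt0.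
- by apply: is_cvg_geometric_series; rewrite ger0_norm ?invf_lt1 ?ltr1n.
Qed.

Lemma pseries_twice_derivable (c : R^nat) (x u : R) :
  cvgn (pseries c x) -> x != 0 -> `|u| < `|x| / 64 ->
  is_derive u 1 (fun v => limn (pseries c v)) (limn (pseries (pseries_diffs c) u))
  /\ is_derive u 1 (fun v => limn (pseries (pseries_diffs c) v))
       (limn (pseries (pseries_diffs (pseries_diffs c)) u)).
Proof.
move=> cx x0 ux.
have X0 : 0 < `|x| by rewrite normr_gt0.
have nx (k : R) : 0 < k -> `|x / k| = `|x| / k.
  by move=> k0; rewrite normf_div (gtr0_norm k0).
have x_neq0 (k : R) : 0 < k -> x / k != 0.
  by move=> k0; rewrite mulf_neq0 // invr_eq0 gt_eqF.
have c1 : cvgn (pseries (pseries_diffs c) (x / 4)).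
  by apply: is_cvg_pseries_diffs cx x0 _; rewrite nx //; lra.
have c2 : cvgn (pseries (pseries_diffs (pseries_diffs c)) (x / 16)).
  by apply: is_cvg_pseries_diffs c1 (x_neq0 _ _) _; rewrite ?nx //; lra.
have c3 : cvgn (pseries (pseries_diffs (pseries_diffs (pseries_diffs c))) (x / 64)).
  by apply: is_cvg_pseries_diffs c2 (x_neq0 _ _) _; rewrite ?nx //; lra.
have c0' : cvgn (pseries c (x / 64)).
  by apply: is_cvg_pseries_inside cx _; rewrite nx //; lra.
have c1' : cvgn (pseries (pseries_diffs c) (x / 64)).
  by apply: is_cvg_pseries_inside c1 _; rewrite !nx //; lra.
have c2' : cvgn (pseries (pseries_diffs (pseries_diffs c)) (x / 64)).
  by apply: is_cvg_pseries_inside c2 _; rewrite !nx //; lra.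
have ux' : `|u| < `|x / 64| by rewrite nx //; lra.
by split; [exact: pseries_snd_diffs c0' c1' c2' ux'
          | exact: pseries_snd_diffs c1' c2' c3 ux'].
Qed.

End PowerSeries.

Lemma real_analytic_twice_derivable (R : realType) (G : R -> R) :
  real_analytic G -> forall t, derivable G t 1 /\ derivable (derive1 G) t 1.
Proof.
move=> hG t; have [r [r0 [c hc]]] := hG t.
pose P (b : R^nat) u := limn (pseries b u).
have cvgG u : `|u| < r -> pseries c u @ \oo --> G (u + t).
  move=> hu; have := hc (u + t); rewrite addrK => /(_ hu).
  suff -> : (fun N : nat => \sum_(k < N) c k * u ^+ k) = pseries c u by [].
  by apply/funext => N; rewrite /pseries /series /= big_mkord.
have PG u : `|u| < r -> P c u = G (u + t) by move=> hu; exact: cvg_lim (cvgG _ hu).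
have cr : cvgn (pseries c (r / 2)).
  by apply/cvg_ex; exists (G (r / 2 + t)); apply: cvgG; rewrite gtr0_norm ?divr_gt0 //; lra.
have r2 : r / 2 != 0 by rewrite mulf_neq0 ?invr_eq0 ?gt_eqF.
pose K := `|r / 2| / 64.
have K0 : 0 < K by rewrite divr_gt0 // normr_gt0.
have Kr : K < r by rewrite /K gtr0_norm ?divr_gt0 //; lra.
have DP (u : R) (hu : `|u| < K) := pseries_twice_derivable cr r2 hu.
have DG s : `|s - t| < K -> is_derive s 1 G (P (pseries_diffs c) (s - t)).
  move=> hs.
  have nearG : \forall v \near s, (P c \o shift (- t)) v = G v.
    apply/nbhs_ballP; exists (r - `|s - t|); first by rewrite /= subr_gt0; lra.
    move=> v; rewrite /= -ball_normE /= => hv.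
    rewrite PG ?subrK //; rewrite distrC in hv.
    by have := ler_normD (v - s) (s - t); rewrite addrA subrK; lra.
  apply: (near_eq_is_derive nearG); rewrite -[P _ (s - t)]mulr1.
  by apply: is_derive1_comp; [exact: (DP _ hs).1 | exact: is_derive_shift].
split; first by have := DG t; rewrite subrr normr0 => /(_ K0) [].
have nearG1 : \forall v \near t, (P (pseries_diffs c) \o shift (- t)) v = derive1 G v.
  apply/nbhs_ballP; exists K => //= v; rewrite -ball_normE /= distrC => hv.
  by have := DG v hv; rewrite derive1E => /(@derive_val _ _ _ _ _ _ _) ->.
have : is_derive t 1 (P (pseries_diffs c) \o shift (- t))
    (P (pseries_diffs (pseries_diffs c)) (t - t) * 1).
  have tt : `|t - t| < K by rewrite subrr normr0.
  by apply: is_derive1_comp; [exact: (DP _ tt).2 | exact: is_derive_shift].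
by move/(near_eq_is_derive nearG1) => [].
Qed.

Lemma is_derive_ge0_le (R : realType) (h h' : R -> R) (a b : R) :
  (forall s : R, is_derive s (1 : R) h (h' s)) -> (forall s, a < s < b -> 0 <= h' s) ->
  a <= b -> h a <= h b.
Proof.
move=> dh h'_ge0 ab.
have dh1 s : derivable h s 1 by have [] := dh s.
apply: (@ger0_derive1_ndecr _ h a b) => //.
- move=> s; rewrite in_itv /= => s_ab.
  by rewrite derive1E (@derive_val _ _ _ _ _ _ _ (dh s)) h'_ge0.
- exact: derivable_within_continuous.
Qed.

Section SecondDerivativeBound.
Variables (R : realType) (G : R -> R) (g : R).
Hypotheses (dG : forall t : R, derivable G t 1)
  (d2G : forall t : R, derivable (derive1 G) t 1).
Hypothesis d2G_le : forall t : R, `|derive1 (derive1 G) t| <= g.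

Let is_derive1 {h : R -> R} {t : R} : derivable h t 1 -> is_derive t (1 : R) h (derive1 h t).
Proof. by rewrite derive1E => /derivableP. Qed.

Lemma derive1_ge (t : R) : 0 <= t -> derive1 G 0 - g * t <= derive1 G t.
Proof.
move=> t0.
have dK s : is_derive s (1 : R) (fun s => derive1 G s + g * s) (derive1 (derive1 G) s + g).
  have hG2 := is_derive1 (@d2G s).
  by apply: is_derive_eq; rewrite [g%:A]mulr1.
have K'_ge0 s : 0 < s < t -> 0 <= derive1 (derive1 G) s + g.
  by move=> _; have := d2G_le s; rewrite ler_norml => /andP[]; lra.
by have := is_derive_ge0_le dK K'_ge0 t0; lra.
Qed.

Lemma increment_ge a b : 0 <= a -> a <= b ->
  (b - a) * derive1 G 0 - g / 2 * (b ^+ 2 - a ^+ 2) <= G b - G a.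
Proof.
move=> a0 ab.
have dH (s : R) : is_derive s (1 : R) (fun s => G s - s * derive1 G 0 + g / 2 * s ^+ 2)
    (derive1 G s - derive1 G 0 + g * s).
  have hG := is_derive1 (@dG s).
  apply: is_derive_eq; rewrite scaler0 add0r [_%:A]mulr1 [s%:A]mulr1.
  by rewrite -[(g / 2) *: (s + s)]/(g / 2 * (s + s)); field.
have H'_ge0 (s : R) : a < s < b -> 0 <= derive1 G s - derive1 G 0 + g * s.
  by move=> /andP[sa _]; have := derive1_ge (le_trans a0 (ltW sa)); lra.
by have := is_derive_ge0_le dH H'_ge0 ab; lra.
Qed.

End SecondDerivativeBound.

Section SquaredNorm.
Variables (R : realType) (d : nat).
Implicit Types v : 'rV[R]_d.

Lemma sqnorm2_ge0 v : 0 <= sqnorm2 v.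
Proof. by rewrite /sqnorm2 sumr_ge0 // => i _; rewrite sqr_ge0. Qed.

Lemma sqnorm2_eq0 v : sqnorm2 v = 0 -> v = 0.
Proof.
move=> v0; apply/rowP => i; rewrite mxE.
have := @psumr_eq0P _ _ xpredT (fun i => v ord0 i ^+ 2) (fun i _ => sqr_ge0 _) v0 i isT.
by move/eqP; rewrite sqrf_eq0 => /eqP.
Qed.

Lemma sqnorm2Z (k : R) v : sqnorm2 (k *: v) = k ^+ 2 * sqnorm2 v.
Proof. by rewrite /sqnorm2 mulr_sumr; apply: eq_bigr => i _; rewrite mxE exprMn. Qed.

Lemma sqnorm2N v : sqnorm2 (- v) = sqnorm2 v.
Proof. by rewrite -scaleN1r sqnorm2Z sqrrN expr1n mul1r. Qed.

Lemma coord_le_norm v i : `|v ord0 i| <= `|v|.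
Proof.
by rewrite -[`|v|]/(mx_norm v) mx_normrE (le_bigmax _ (fun ij => `|v ij.1 ij.2|) (ord0, i)).
Qed.

Lemma sqnorm2_le v : sqnorm2 v <= d%:R * `|v| ^+ 2.
Proof.
rewrite /sqnorm2 mulr_natl -[d in _ *+ d]card_ord -sumr_const; apply: ler_sum => i _.
by rewrite -real_normK ?num_real // lerXn2r ?nnegrE // coord_le_norm.
Qed.

Lemma sqnorm2_le_radius v (r : R) : r <= 1 -> `|v| <= 2 * r ->
  sqnorm2 v <= 4 * d.+1%:R * r.
Proof.
move=> r1 vr; apply: le_trans (sqnorm2_le v) _.
have v2 : `|v| ^+ 2 <= 4 * r by have := normr_ge0 v; rewrite expr2; nra.
by rewrite [4 * _]mulrC -mulrA; apply: ler_pM => //; rewrite ler_nat.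
Qed.

End SquaredNorm.

Lemma derive1_line (R : realType) (V : normedModType R) (h : V -> R) (y p : V) :
  differentiable h y -> derive1 (fun a : R => h (y + a *: p)) 0 = 'd h y p.
Proof.
move=> dh; rewrite -deriveE // /derive1 /derive /=.
suff -> : (fun k : R => k^-1 *: (h (y + (k + 0) *: p) - h (y + 0 *: p))) =
  (fun k : R => k^-1 *: (h (k *: p + y) - h y)) by [].
by apply/funext => k; rewrite addr0 scale0r addr0 [y + _]addrC.
Qed.

Section LineIncrement.
Variables (R : realType) (d : nat) (h : 'rV[R]_d -> R) (gamma : R).
Hypothesis h_diff : forall x : 'rV[R]_d, differentiable h x.
Hypothesis h_anal : forall x p : 'rV[R]_d, real_analytic (fun a : R => h (x + a *: p)).
Hypothesis h_curv : forall x p : 'rV[R]_d, sqnorm2 p = 1 -> forall a : R,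
  `|derive1 (derive1 (fun a : R => h (x + a *: p))) a| <= gamma.

Lemma line_increment_ge (y v : 'rV[R]_d) (a b : R) : 0 <= a -> a <= b ->
  (b - a) * 'd h y v - gamma / 2 * sqnorm2 v * (b ^+ 2 - a ^+ 2)
    <= h (y + b *: v) - h (y + a *: v).
Proof.
move=> a0 ab; have [v0|v0] := eqVneq (sqnorm2 v) 0.
  by rewrite v0 (sqnorm2_eq0 v0) !scaler0 linear0 subrr; lra.
pose s := Num.sqrt (sqnorm2 v).
have s0 : 0 < s by rewrite sqrtr_gt0 lt_def v0 sqnorm2_ge0.
have s2 : s ^+ 2 = sqnorm2 v by rewrite sqr_sqrtr // sqnorm2_ge0.
pose p := s^-1 *: v.
have vp : v = s *: p by rewrite /p scalerA divff ?scale1r // gt_eqF.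
have p1 : sqnorm2 p = 1.
  by rewrite /p sqnorm2Z -s2 exprVn mulVf // expf_neq0 // gt_eqF.
pose G t := h (y + t *: p).
have [dG d2G] : (forall t, derivable G t 1) /\ (forall t, derivable (derive1 G) t 1).
  by split=> t; have [] := real_analytic_twice_derivable (h_anal y p) t.
have := increment_ge dG d2G (h_curv y p1) (mulr_ge0 a0 (ltW s0)) (ler_wpM2r (ltW s0) ab).
rewrite /G derive1_line // -!scalerA -vp.
have -> : 'd h y v = s * 'd h y p by rewrite vp linearZ.
rewrite -s2; apply: le_trans; lra.
Qed.

End LineIncrement.

Lemma minI_le (R : realType) (n : nat) (D : 'I_n -> R) j : minI D <= D j.
Proof. exact: bigmin_le. Qed.

Lemma minI_ge (R : realType) (n : nat) (D : 'I_n -> R) c : (0 < n)%N ->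
  (forall j, c <= D j) -> c <= minI D.
Proof.
move=> n0 cD; apply: le_bigmin => //.
case: n D cD n0 => // n D cD _.
by rewrite -nth0 (nth_map ord0) ?size_enum_ord // (nth_ord_enum ord0 ord0).
Qed.

Section QuadraticModel.
Variables (R : realType) (d n : nat) (f : 'rV[R]_d -> R)
  (F : 'I_n -> 'rV[R]_d -> R) (gamma : R).

Lemma qbar_ge (xs : nat -> 'rV[R]_d) s z k :
  (k <= s)%N -> qmodel f F gamma (xs k) z <= qbar f F gamma xs s z.
Proof.
rewrite -ltnS => ks.
exact: (le_bigmax _ (fun k : 'I_s.+1 => qmodel f F gamma (xs k) z) (Ordinal ks)).
Qed.

Lemma qbar_le (xs : nat -> 'rV[R]_d) s z c :
  (forall k, qmodel f F gamma (xs k) z <= c) -> qbar f F gamma xs s z <= c.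
Proof. by move=> qc; apply: bigmax_le. Qed.

Hypothesis F_diff : forall j x, differentiable (F j) x.
Hypothesis F_anal : forall j (x p : 'rV[R]_d),
  real_analytic (fun a : R => F j (x + a *: p)).
Hypothesis F_curv : forall j (x p : 'rV[R]_d), sqnorm2 p = 1 -> forall a : R,
  `|derive1 (derive1 (fun a : R => F j (x + a *: p))) a| <= gamma.

Let F_line_increment_ge j := line_increment_ge (@F_diff j) (F_anal j) (F_curv j).

Lemma qmodel_le (f_pw : piecewise_of f F) (y z : 'rV[R]_d) :
  qmodel f F gamma y z <= f z.
Proof.
have [m [t [J [t0 tm tmono tpiece]]]] := f_pw y z.
pose v := z - y; pose mu := minI (fun j => 'd (F j) y v).
pose c := gamma / 2 * sqnorm2 v.
have t_ge0 k : (k <= m)%N -> 0 <= t k.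
  elim: k => [|k IH] km; first by rewrite t0.
  exact: le_trans (IH (ltnW km)) (tmono k km).
(* along each piece, f coincides with some F_j, whose increment dominates the model's *)
have f_path_ge k : (k <= m)%N -> t k * mu - c * t k ^+ 2 <= f (y + t k *: v) - f y.
  elim: k => [|k IH] km; first by rewrite t0 scale0r addr0 subrr mul0r expr0n /=; lra.
  have := F_line_increment_ge (J k) y v (t_ge0 k (ltnW km)) (tmono k km).
  rewrite -(tpiece k km (t k)) ?lexx ?tmono // -(tpiece k km (t k.+1)) ?lexx ?tmono //.
  have : (t k.+1 - t k) * mu <= (t k.+1 - t k) * 'd (F (J k)) y v.
    by rewrite ler_wpM2l ?subr_ge0 ?tmono // minI_le.
  have := IH (ltnW km); rewrite /c; lra.
have := f_path_ge m (leqnn m); rewrite tm scale1r mul1r expr1n mulr1 [y + v]addrC subrK.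
by rewrite /qmodel -/v -/mu -/c; lra.
Qed.

Lemma qmodel_ge_increments (n_gt0 : (0 < n)%N) (u w : 'rV[R]_d) (c : R) :
  (forall j, F j (u + (u - w)) - F j u <= c) ->
  f u - c - gamma * sqnorm2 (w - u) <= qmodel f F gamma u w.
Proof.
move=> Fc.
have dF_ge j : - c - gamma / 2 * sqnorm2 (w - u) <= 'd (F j) u (w - u).
  have := F_line_increment_ge j u (u - w) (lexx 0) ler01.
  rewrite subr0 mul1r expr1n expr0n /= subr0 mulr1 scale1r scale0r addr0.
  rewrite -[sqnorm2 (u - w)]sqnorm2N -[in 'd _ _ _]opprB linearN opprB.
  by have := Fc j; lra.
have := minI_ge n_gt0 dF_ge; rewrite /qmodel.
have -> : gamma * sqnorm2 (w - u) = 2 * (gamma / 2 * sqnorm2 (w - u)) by field.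
lra.
Qed.

Lemma qmodel_near (n_gt0 : (0 < n)%N) (f_cont : continuous f) (gamma_gt0 : 0 < gamma)
    (x : 'rV[R]_d) (e : R) : 0 < e ->
  exists2 r : R, 0 < r & forall u w : 'rV[R]_d, `|x - u| < r -> `|x - w| < r ->
    f x - e <= qmodel f F gamma u w.
Proof.
move=> e0; pose e' := e / 4; have e'0 : 0 < e' by rewrite divr_gt0.
have /nbhs_ballP[r0 r0_gt0 near_x] :
    \forall u \near x, `|f x - f u| < e' /\ forall j, `|F j x - F j u| < e'.
  near=> u; split; near: u; first by have /cvgrPdist_lt := f_cont x; apply.
  apply: filter_forall => j.
  by have /cvgrPdist_lt := differentiable_continuous (F_diff j x); apply.
have {}near_x u : `|x - u| < r0 -> `|f x - f u| < e' /\ forall j, `|F j x - F j u| < e'.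
  by move=> xu; apply: near_x; rewrite -ball_normE.
have dpos : 0 < gamma * (4 * d.+1%:R) by rewrite !mulr_gt0.
pose r := Num.min (r0 / 3) (Num.min 1 (e' / (gamma * (4 * d.+1%:R)))).
have r_gt0 : 0 < r by rewrite !lt_min divr_gt0 ?ltr01 ?divr_gt0.
exists r => // u w xu xw.
have [r_r0 r1 r_e] : [/\ r <= r0 / 3, r <= 1 & r * (gamma * (4 * d.+1%:R)) <= e'].
  by split; rewrite -?ler_pdivlMr // !ge_min lexx ?orbT.
have [fu _] := near_x u ltac:(lra).
have Fc j : F j (u + (u - w)) - F j u <= 2 * e'.
  have : `|x - (u + (u - w))| < r0.
    have -> : x - (u + (u - w)) = (x - u) + (x - u) - (x - w).
      by apply/rowP => i; rewrite !mxE; ring.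
    by apply: le_lt_trans (ler_normB _ _) _; have := ler_normD (x - u) (x - u); lra.
  move=> /near_x[_ /(_ j)]; have [_ /(_ j)] := near_x u ltac:(lra).
  by rewrite !ltr_norml; lra.
have sq_le : gamma * sqnorm2 (w - u) <= e'.
  have wu : `|w - u| <= 2 * r.
    have -> : w - u = (x - u) - (x - w) by apply/rowP => i; rewrite !mxE; ring.
    by apply: le_trans (ler_normB _ _) _; lra.
  apply: le_trans (ler_wpM2l (ltW gamma_gt0) (sqnorm2_le_radius r1 wu)) _.
  by rewrite [_ * r]mulrC mulrCA.
have := qmodel_ge_increments n_gt0 Fc; rewrite ltr_norml in fu.
rewrite /e' in fu sq_le e'0 *; lra.
Unshelve. all: end_near.
Qed.

Lemma iterate_qmodel_le (f_pw : piecewise_of f F) (B : set 'rV[R]_d)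
    (xs : nat -> 'rV[R]_d) :
  (forall s z, B z -> qbar f F gamma xs s (xs s.+1) <= qbar f F gamma xs s z) ->
  forall k m z, (k < m)%N -> B z -> qmodel f F gamma (xs k) (xs m) <= f z.
Proof.
move=> xs_min k [//|s] z ks Bz.
apply: le_trans (qbar_ge xs (xs s.+1) (ks : (k <= s)%N)) _.
apply: le_trans (xs_min s z Bz) _.
by apply: qbar_le => k'; exact: qmodel_le.
Qed.

End QuadraticModel.

Lemma cluster_nat_ball (R : realType) (V : normedModType R) (xs : nat -> V) (x : V) :
  cluster (xs @ \oo) x ->
  forall e : R, 0 < e -> forall N, exists k, (N <= k)%N /\ `|x - xs k| < e.
Proof.
move=> xs_x e e0 N.
have tail : (xs @ \oo) (xs @` [set k | (N <= k)%N]) by exists N => // k /= Nk; exists k.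
have [_ [[k Nk <-]]] := xs_x _ _ tail (nbhsx_ballx x _ e0).
by rewrite -ball_normE; exists k.
Qed.

Lemma box_cluster (R : realType) (d : nat) (lo hi : 'rV[R]_d) (xs : nat -> 'rV[R]_d)
    (x : 'rV[R]_d) :
  (forall k, box lo hi (xs k)) -> cluster (xs @ \oo) x -> box lo hi x.
Proof.
move=> xs_box xs_x i.
have near_i e : 0 < e -> exists k, `|x ord0 i - xs k ord0 i| < e.
  move=> e0; have [k [_ xk]] := cluster_nat_ball xs_x e0 0.
  by exists k; apply: le_lt_trans xk; have := coord_le_norm (x - xs k) i; rewrite !mxE.
apply/andP; split; apply/ler_addgt0Pr => e /near_i[k];
  have /andP[] := xs_box k i; rewrite ltr_norml; lra.
Qed.

Theorem theorem5p1 (R : realType) (d n : nat) (hd : (0 < d)%N) (hn : (0 < n)%N)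
  (lo hi : 'rV[R]_d) (hlohi : forall i, lo ord0 i <= hi ord0 i)
  (f : 'rV[R]_d -> R) (F : 'I_n -> 'rV[R]_d -> R) (gamma : R)
  (hdiff : forall j x, differentiable (F j) x)
  (hanal : forall j x p, real_analytic (fun a : R => F j (x + a *: p)))
  (hcont : continuous f)
  (hpw : piecewise_of f F)
  (hgamma : 0 < gamma)
  (hcurv : forall j x p, sqnorm2 p = 1 -> forall a : R,
      `| derive1 (derive1 (fun a : R => F j (x + a *: p))) a | <= gamma)
  (xs : nat -> 'rV[R]_d)
  (hx0 : box lo hi (xs 0%N))
  (hstep : forall s, box lo hi (xs s.+1) /\
      forall z, box lo hi z -> qbar f F gamma xs s (xs s.+1) <= qbar f F gamma xs s z)
  (xstar : 'rV[R]_d) (hcl : cluster (xs @ \oo) xstar) :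
  box lo hi xstar /\ forall z, box lo hi z -> f xstar <= f z.
Proof.
have xs_box k : box lo hi (xs k) by case: k => [|k] //; case: (hstep k).
split; first exact: box_cluster xs_box hcl.
move=> z z_box; apply/ler_addgt0Pr => e e0.
have [r r0 near] := qmodel_near hdiff hanal hcurv hn hcont hgamma xstar e0.
have [k [_ xk]] := cluster_nat_ball hcl r0 0.
have [m [km xm]] := cluster_nat_ball hcl r0 k.+1.
have := near _ _ xk xm.
have := iterate_qmodel_le hdiff hanal hcurv hpw (fun s => (hstep s).2) km z_box.
lra.
Qed.
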